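(* (1) If $A\in\mathrm{Sym}_{>}(\mathbb C^{2d})$, then $\bar A\#A\in\mathrm{Sym}_{\rm p}(\mathbb R^{2d})$. (2) If $A\in\mathrm{Sym}^{\rm qnd}_{>}(\mathbb C^{2d})$, then $\bar A\#A\in\mathrm{Sym}_{\rm p}^{\rm qnd}(\mathbb R^{2d})$.
   Context: Let $d\ge1$, let $\mathbb 1$ denote an identity matrix and $\theta=\begin{bmatrix}0&-i\mathbb 1_d\\ i\mathbb 1_d&0\end{bmatrix}$. $\mathrm{Sym}_{>}(\mathbb C^{n})$ is the set of complex symmetric $n\times n$ matrices with positive definite real part; $\mathrm{Sym}^{\rm qnd}_{>}(\mathbb C^{2d})=\{A\in\mathrm{Sym}_{>}(\mathbb C^{2d}):\det(\mathbb 1+A\theta)\ne0\}$; $\mathrm{Sym}_{>}(\mathbb R^{n})$ is the set of real symmetric positive definite matrices; $\mathrm{Sym}_{\rm p}(\mathbb R^{2d})=\{A\in\mathrm{Sym}_{>}(\mathbb R^{2d}):\sigma(A\theta)\subset[-1,1]\}$ and $\mathrm{Sym}_{\rm p}^{\rm qnd}(\mathbb R^{2d})=\{A\in\mathrm{Sym}_{\rm p}(\mathbb R^{2d}):\det(\mathbb 1+A\theta)\ne0\}$. For $A,B\in\mathrm{Sym}_>(\mathbb C^{2d})$, $A\#B:=J^TM^{-1}J$ with $M=\begin{bmatrix}\theta A\theta&-\theta\\ \theta&\theta B\theta\end{bmatrix}$ (invertible in this case) and $J=\begin{bmatrix}-\mathbb 1_{2d}\\ \mathbb 1_{2d}\end{bmatrix}$.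 $\bar A$ is the entrywise complex conjugate. *)

(* The complex field C^{...} is modelled by an arbitrary
   numeric closed field C (e.g. algC, or any model of the complex numbers). *)
From HB Require Import structures.
From mathcomp Require Import all_boot all_order all_algebra.
Set Implicit Arguments. Unset Strict Implicit. Unset Printing Implicit Defensive.
Import Order.TTheory GRing.Theory Num.Theory.
Local Open Scope ring_scope.

Section Defs.
Variable C : numClosedFieldType.

Definition theta (d : nat) : 'M[C]_(d + d) :=
  block_mx 0 (- ('i *: 1%:M)) ('i *: 1%:M) 0.

Definition cconj_mx (n : nat) (A : 'M[C]_n) : 'M[C]_n := map_mx (fun z => z^*) A.

Definition remx (n : nat) (A : 'M[C]_n) : 'M[C]_n := map_mx (fun z => 'Re z) A.

Definition real_mx (m n : nat) (A : 'M[C]_(m, n)) : Prop :=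
  forall i j, A i j \is Num.real.

Definition symmetric (n : nat) (A : 'M[C]_n) : Prop := A^T = A.

Definition posdef_real (n : nat) (S : 'M[C]_n) : Prop :=
  forall x : 'cV[C]_n, real_mx x -> x != 0 -> 0 < (x^T *m S *m x) 0 0.

Definition SymC_gt (n : nat) (A : 'M[C]_n) : Prop :=
  symmetric A /\ posdef_real (remx A).

Definition SymC_gt_qnd (d : nat) (A : 'M[C]_(d + d)) : Prop :=
  SymC_gt A /\ \det (1%:M + A *m theta d) != 0.

Definition SymR_gt (n : nat) (A : 'M[C]_n) : Prop :=
  real_mx A /\ symmetric A /\ posdef_real A.

Definition SymR_p (d : nat) (A : 'M[C]_(d + d)) : Prop :=
  SymR_gt A /\
  forall l : C, eigenvalue (A *m theta d) l -> l \is Num.real /\ -1 <= l <= 1.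

Definition SymR_p_qnd (d : nat) (A : 'M[C]_(d + d)) : Prop :=
  SymR_p A /\ \det (1%:M + A *m theta d) != 0.

Definition sharpM (d : nat) (A B : 'M[C]_(d + d)) : 'M[C]_((d + d) + (d + d)) :=
  block_mx (theta d *m A *m theta d) (- theta d) (theta d) (theta d *m B *m theta d).

Definition Jmx (d : nat) : 'M[C]_((d + d) + (d + d), d + d) := col_mx (- 1%:M) 1%:M.

Definition sharp (d : nat) (A B : 'M[C]_(d + d)) : 'M[C]_(d + d) :=
  (Jmx d)^T *m invmx (sharpM A B) *m Jmx d.

End Defs.

From HB Require Import structures.
From mathcomp Require Import all_boot all_order all_algebra ring.
Set Implicit Arguments. Unset Strict Implicit. Unset Printing Implicit Defensive.
Import Order.TTheory GRing.Theory Num.Theory Num.Def.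
Local Open Scope ring_scope.
Local Open Scope sesquilinear_scope.

(* Write A = R + P with R = Re A real, symmetric and positive definite, and
   P = i Im A, so that conj A = R - P.  Solving the block system that defines
   conj A # A gives conj A # A = 2 θ H^-1 θ with H = R + K^* R^-1 K, K = θ - P;
   H is real, symmetric and positive definite, hence so is conj A # A.
   If v (conj A # A) θ = λ v with v <> 0, then c = v θ H^-1 satisfies
   2 c θ c^* = λ c H c^*, whereas H ± 2θ = (K^* ± R) R^-1 (K^* ± R)^* is positive
   semidefinite; this forces λ ∈ [-1, 1].  For λ = -1 it even forces
   c (θ + A) = 0, impossible when det (1 + A θ) <> 0 because θ + A = (1 + A θ) θ. *)

Ltac mx_lin := apply/matrixP => ? ?;
  rewrite ?(mulmxDr, mulmxDl, mulmxBr, mulmxBl, mulmxN, mulNmx, mul1mx, mulmxA,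
            =^~ scalemxAl, =^~ scalemxAr) !mxE; ring.

Section HermitianForm.
Variable C : numClosedFieldType.

Lemma trmxC_mul m n p (A : 'M[C]_(m, n)) (B : 'M[C]_(n, p)) :
  (A *m B)^t* = B^t* *m A^t*.
Proof. by rewrite trmx_mul map_mxM. Qed.

Lemma trmxCD m n (A B : 'M[C]_(m, n)) : (A + B)^t* = A^t* + B^t*.
Proof. by rewrite linearD map_mxD. Qed.

Lemma trmxCZ m n a (A : 'M[C]_(m, n)) : (a *: A)^t* = a^* *: A^t*.
Proof. by rewrite linearZ map_mxZ. Qed.

Lemma trmxC_inv n (A : 'M[C]_n) : (invmx A)^t* = invmx (A^t*).
Proof. by rewrite trmx_inv map_invmx. Qed.

Lemma real_mxP m n (A : 'M[C]_(m, n)) : real_mx A <-> A ^ conjC = A.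
Proof.
split=> [Areal | AC i j]; first by apply/matrixP => i j; rewrite mxE conj_Creal.
by rewrite CrealE -{2}AC mxE.
Qed.

Definition hform n (X : 'M[C]_n) (u : 'rV[C]_n) : C := (u *m X *m u^t*) 0 0.

Definition posdefmx n (X : 'M[C]_n) : Prop := forall u, u != 0 -> 0 < hform X u.

Lemma hformD n (X Y : 'M[C]_n) u : hform (X + Y) u = hform X u + hform Y u.
Proof. by rewrite /hform mulmxDr mulmxDl mxE. Qed.

Lemma hformZ n a (X : 'M[C]_n) u : hform (a *: X) u = a * hform X u.
Proof. by rewrite /hform -scalemxAr -scalemxAl !mxE. Qed.

Lemma hform_congr n (M X : 'M[C]_n) u :
  hform (M *m X *m M^t*) u = hform X (u *m M).
Proof. by rewrite /hform trmxC_mul !mulmxA. Qed.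

Lemma posdefmx_ge0 n (X : 'M[C]_n) u : posdefmx X -> 0 <= hform X u.
Proof.
move=> Xpos; have [->|u_neq0] := eqVneq u 0; last exact/ltW/Xpos.
by rewrite /hform !mul0mx mxE.
Qed.

Lemma posdefmx_unit n (X : 'M[C]_n) : posdefmx X -> X \in unitmx.
Proof.
move=> Xpos; rewrite unitmxE unitfE; apply/det0P => -[u u_neq0 uX0].
by have := Xpos u u_neq0; rewrite /hform uX0 mul0mx mxE ltxx.
Qed.

Lemma posdefmx_inv n (X : 'M[C]_n) : X^t* = X -> posdefmx X -> posdefmx (invmx X).
Proof.
move=> Xherm Xpos u u_neq0; have Xu := posdefmx_unit Xpos.
have -> : invmx X = invmx X *m X *m (invmx X)^t*.
  by rewrite trmxC_inv Xherm mulVmx // mul1mx.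
rewrite hform_congr.
apply: Xpos; apply: contraNneq u_neq0 => uX0.
by rewrite -[u](mulmxKV Xu) uX0 mul0mx.
Qed.

Lemma posdefmx_real n (S : 'M[C]_n) :
  S ^ conjC = S -> S^T = S -> posdef_real S -> posdefmx S.
Proof.
move=> Sreal Ssym Spos u u_neq0.
pose a := u ^ (@Re _); pose b := u ^ (@Im _).
have aC : a ^ conjC = a by apply/matrixP => i j; rewrite !mxE conj_Creal ?Creal_Re.
have bC : b ^ conjC = b by apply/matrixP => i j; rewrite !mxE conj_Creal ?Creal_Im.
have uE : u = a + 'i *: b by apply/matrixP => i j; rewrite !mxE -Crect.
have uCE : u^t* = a^T - 'i *: b^T.
  apply/matrixP => i j; rewrite !mxE {1}[u _ _]Crect.
  by rewrite conjC_rect ?Creal_Re ?Creal_Im.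
have quad_pos (x : 'rV[C]_n) : x ^ conjC = x -> x != 0 -> 0 < (x *m S *m x^T) 0 0.
  move=> xC x_neq0; have := Spos x^T; rewrite trmxK; apply.
    by apply/real_mxP; rewrite -map_trmx xC.
  by rewrite trmx_eq0.
have cross : (b *m S *m a^T) 0 0 = (a *m S *m b^T) 0 0.
  have tr11 (M : 'M[C]_1) : M 0 0 = M^T 0 0 by rewrite mxE.
  by rewrite tr11 !trmx_mul trmxK Ssym mulmxA.
have -> : hform S u = (a *m S *m a^T) 0 0 + (b *m S *m b^T) 0 0.
  have -> : hform S u = (a *m S *m a^T) 0 0 + 'i * (b *m S *m a^T) 0 0
      - 'i * (a *m S *m b^T) 0 0 - 'i * 'i * (b *m S *m b^T) 0 0.
    rewrite /hform uCE {1}uE !(mulmxDl, mulmxBr, mulmxN, mulNmx, mul1mx,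
      =^~ scalemxAl, =^~ scalemxAr) !mxE; ring.
  by rewrite cross mulCii; ring.
have quad_ge0 (x : 'rV[C]_n) : x ^ conjC = x -> 0 <= (x *m S *m x^T) 0 0.
  move=> xC; have [->|/(quad_pos x xC)/ltW//] := eqVneq x 0.
  by rewrite !mul0mx mxE.
have [a0|a_neq0] := eqVneq a 0; last exact: ltr_wpDr (quad_ge0 b bC) (quad_pos a aC a_neq0).
have b_neq0 : b != 0 by apply: contraNneq u_neq0 => b0; rewrite uE a0 b0 scaler0 addr0.
exact: ltr_wpDl (quad_ge0 a aC) (quad_pos b bC b_neq0).
Qed.
End HermitianForm.

Section Theta.
Variables (C : numClosedFieldType) (d : nat).
Local Notation th := (theta C d).

Lemma theta_sqr : th *m th = 1%:M.
Proof.
rewrite /theta mulmx_block !(mul0mx, mulmx0, addr0, add0r) scalemx1.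
rewrite mulNmx mulmxN -!scalar_mxM mulCii.
by rewrite -!raddfN /= opprK -scalar_mx_block.
Qed.

Lemma thetaK m (X : 'M[C]_(d + d, m)) : th *m (th *m X) = X.
Proof. by rewrite mulmxA theta_sqr mul1mx. Qed.

Lemma thetaKr m (X : 'M[C]_(m, d + d)) : X *m th *m th = X.
Proof. by rewrite -mulmxA theta_sqr mulmx1. Qed.

Lemma theta_unit : th \in unitmx.
Proof. by case: (mulmx1_unit theta_sqr). Qed.

Lemma conj_theta : th ^ conjC = - th.
Proof.
rewrite /theta map_block_mx !map_mx0 map_mxN map_mxZ map_mx1 /= conjCi.
by rewrite opp_block_mx !oppr0 scaleNr opprK.
Qed.

Lemma tr_theta : th^T = - th.
Proof.
rewrite /theta tr_block_mx !trmx0 linearN /= !linearZ /= trmx1.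
by rewrite opp_block_mx !oppr0 !scalerN opprK.
Qed.

Lemma trmxC_theta : th^t* = th.
Proof. by rewrite tr_theta map_mxN conj_theta opprK. Qed.

Lemma theta_add_unit (A : 'M[C]_(d + d)) :
  \det (1%:M + A *m th) != 0 -> th + A \in unitmx.
Proof.
move=> det_neq0; have -> : th + A = (1%:M + A *m th) *m th.
  by rewrite mulmxDl mul1mx thetaKr.
by rewrite unitmx_mul theta_unit unitmxE unitfE det_neq0.
Qed.
End Theta.

(* H = R + K^* R^-1 K with K = θ - P, once P^* = - P. *)
Definition sharp_gram (C : numClosedFieldType) (d : nat) (R P : 'M[C]_(d + d)) :=
  R + (theta C d + P) *m invmx R *m (theta C d - P).

Section SharpFormula.
Variables (C : numClosedFieldType) (d : nat).
Local Notation n := (d + d).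
Local Notation th := (theta C d).
Variables R P : 'M[C]_n.
Hypothesis R_unit : R \in unitmx.
Local Notation H := (sharp_gram R P).

Lemma sharp_gram_shift (e : C) : e ^+ 2 = 1 ->
  H + (2 * e) *: th = (th + P + e *: R) *m invmx R *m (th - P + e *: R).
Proof.
move=> e2; rewrite (mulmxDl _ (e *: R)) -scalemxAl mulmxV // scalemx1.
rewrite mulmxDl mul_scalar_mx (mulmxDr _ _ (e *: R)) -scalemxAr mulmxKV //.
rewrite !scalerDr scalerA -expr2 e2 scale1r /sharp_gram; mx_lin.
Qed.

Hypothesis H_unit : H \in unitmx.

(* In the unknowns x = θ Z1, y = θ Z2 the system reads
   R (x + y) = K (y - x) and R (y - x) + K^* (x + y) = 2 θ U, so H (y - x) = 2 θ U. *)
Lemma sharpM_solve p (Z1 Z2 U : 'M[C]_(n, p)) :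
  sharpM (R - P) (R + P) *m col_mx Z1 Z2 = col_mx (- U) U ->
  R *m th *m (Z1 + Z2) = (th - P) *m th *m (Z2 - Z1) /\
  Z2 - Z1 = 2 *: (th *m invmx H *m th *m U).
Proof.
rewrite /sharpM mul_block_col => /eq_col_mx[eq_top eq_bot].
have {eq_top} eq_top : (R - P) *m th *m Z1 - Z2 = - (th *m U).
  have := congr1 (mulmx th) eq_top.
  by rewrite mulmxDr mulNmx !mulmxN !mulmxA theta_sqr !mul1mx.
have {eq_bot} eq_bot : Z1 + (R + P) *m th *m Z2 = th *m U.
  have := congr1 (mulmx th) eq_bot.
  by rewrite mulmxDr !mulmxA theta_sqr !mul1mx.
have sum_eq : R *m th *m (Z1 + Z2) = (th - P) *m th *m (Z2 - Z1).
  apply/eqP; rewrite -subr_eq0; apply/eqP.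
  rewrite -(addNr (th *m U)) -{1}eq_top -eq_bot mulmxBl theta_sqr; mx_lin.
have dif_eq : R *m th *m (Z2 - Z1) + (th + P) *m th *m (Z1 + Z2) = 2 *: (th *m U).
  have -> : 2 *: (th *m U) = th *m U - - (th *m U) by rewrite opprK scaler_nat mulr2n.
  rewrite -eq_top -eq_bot mulmxDl theta_sqr; mx_lin.
have th_sum : th *m (Z1 + Z2) = invmx R *m (th - P) *m th *m (Z2 - Z1).
  by rewrite -[LHS](mulKmx R_unit) (mulmxA R) sum_eq !mulmxA.
have H_dif : H *m (th *m (Z2 - Z1)) = 2 *: (th *m U).
  by rewrite -dif_eq /sharp_gram mulmxDl -[_ *m th *m (Z1 + Z2)]mulmxA th_sum !mulmxA.
split => //; rewrite -[LHS]thetaK -[th *m (Z2 - Z1)](mulKmx H_unit) H_dif.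
by rewrite -!scalemxAr !mulmxA.
Qed.

Lemma sharpM_unit : sharpM (R - P) (R + P) \in unitmx.
Proof.
rewrite -unitmx_tr unitmxE unitfE; apply/det0P => -[v v_neq0 vM0].
set w := v^T; set Z1 := usubmx w; set Z2 := dsubmx w.
have Mw0 : sharpM (R - P) (R + P) *m col_mx Z1 Z2 = col_mx (- 0) 0.
  by rewrite vsubmxK oppr0 col_mx0 -[sharpM _ _]trmxK -trmx_mul vM0 trmx0.
have [sum0 dif0] := sharpM_solve Mw0.
move: dif0; rewrite mulmx0 scaler0 => /subr0_eq Z21.
have Z1_0 : Z1 = 0.
  have RthU : R *m th \in unitmx by rewrite unitmx_mul R_unit theta_unit.
  move: sum0; rewrite Z21 subrr mulmx0 => /(congr1 (mulmx (invmx (R *m th)))).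
  rewrite mulKmx // mulmx0 => /eqP.
  by rewrite -(mulr2n Z1) -scaler_nat scaler_eq0 pnatr_eq0 => /eqP.
by move: v_neq0; rewrite -trmx_eq0 -/w -(vsubmxK w) -/Z1 -/Z2 Z21 Z1_0 col_mx0 eqxx.
Qed.

Lemma sharp_formula : sharp (R - P) (R + P) = 2 *: (th *m invmx H *m th).
Proof.
rewrite /sharp -mulmxA; set Z := invmx _ *m Jmx C d.
have MZ : sharpM (R - P) (R + P) *m col_mx (usubmx Z) (dsubmx Z) = col_mx (- 1%:M) 1%:M.
  by rewrite vsubmxK mulmxA mulmxV ?sharpM_unit // mul1mx.
rewrite -(vsubmxK Z) /Jmx tr_col_mx mul_row_col linearN /= trmx1 !mul1mx mulNmx.
by rewrite mul1mx addrC (sharpM_solve MZ).2 mulmx1.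
Qed.
End SharpFormula.

Lemma real_le11 (F : numDomainType) (a l : F) :
  0 < a -> 0 <= a + l * a -> 0 <= a - l * a -> l \is Num.real /\ -1 <= l <= 1.
Proof.
move=> a_gt0 a_add a_sub.
have l_ge : 0 <= 1 + l by rewrite -(pmulr_lge0 _ a_gt0) mulrDl mul1r.
have l_le : 0 <= 1 - l by rewrite -(pmulr_lge0 _ a_gt0) mulrBl mul1r.
split; first by rewrite -[l](addKr 1) rpredD ?rpredN ?real1 ?ger0_real.
by apply/andP; split; rewrite -subr_ge0 ?opprK ?(addrC l).
Qed.

Section SharpStructure.
Variables (C : numClosedFieldType) (d : nat).
Local Notation n := (d + d).
Local Notation th := (theta C d).
Variables R P : 'M[C]_n.
Hypotheses (R_real : R ^ conjC = R) (R_sym : R^T = R) (R_posdef : posdefmx R).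
Hypotheses (P_conj : P ^ conjC = - P) (P_sym : P^T = P).
Local Notation H := (sharp_gram R P).
Local Notation S := (2 *: (th *m invmx H *m th)).

Let R_unit : R \in unitmx := posdefmx_unit R_posdef.

Let trC_R : R^t* = R.
Proof. by rewrite R_sym R_real. Qed.

Let trC_P : P^t* = - P.
Proof. by rewrite P_sym P_conj. Qed.

Lemma sharp_gram_real : H ^ conjC = H.
Proof.
rewrite /sharp_gram map_mxD !map_mxM map_invmx map_mxD map_mxB conj_theta P_conj R_real.
mx_lin.
Qed.

Lemma sharp_gram_sym : H^T = H.
Proof.
have tr_plus : (th + P)^T = - th + P by rewrite linearD /= tr_theta P_sym.
have tr_minus : (th - P)^T = - th - P by rewrite linearB /= tr_theta P_sym.
rewrite /sharp_gram [LHS]linearD /= !trmx_mul trmx_inv tr_plus tr_minus R_sym; mx_lin.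
Qed.

Lemma sharp_gram_herm : H^t* = H.
Proof. by rewrite sharp_gram_sym sharp_gram_real. Qed.

Lemma trmxC_shift (e : C) : e^* = e -> (th + P + e *: R)^t* = th - P + e *: R.
Proof. by move=> eC; rewrite !trmxCD trmxCZ trmxC_theta trC_P trC_R eC. Qed.

Lemma sharp_gram_posdef : posdefmx H.
Proof.
move=> u u_neq0; rewrite /sharp_gram hformD.
have -> : th - P = (th + P)^t* by rewrite trmxCD trmxC_theta trC_P.
rewrite hform_congr; apply: ltr_wpDr (R_posdef u_neq0).
exact/posdefmx_ge0/posdefmx_inv/R_posdef/trC_R.
Qed.

Lemma sharp_gram_shift_form (e : C) u : e ^+ 2 = 1 -> e^* = e ->
  hform H u + 2 * e * hform th u = hform (invmx R) (u *m (th + P + e *: R)).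
Proof.
by move=> e2 eC; rewrite -hformZ -hformD sharp_gram_shift // -(trmxC_shift eC) hform_congr.
Qed.

Lemma invR_posdef : posdefmx (invmx R).
Proof. exact/posdefmx_inv/R_posdef/trC_R. Qed.

Lemma sharp_real : S ^ conjC = S.
Proof.
rewrite map_mxZ !map_mxM map_invmx sharp_gram_real conj_theta rmorph_nat.
by rewrite mulmxN !mulNmx opprK.
Qed.

Lemma sharp_sym : S^T = S.
Proof.
by rewrite linearZ /= !trmx_mul tr_theta trmx_inv sharp_gram_sym !mulmxN mulNmx opprK mulmxA.
Qed.

Lemma sharp_posdef_real : posdef_real S.
Proof.
move=> x /real_mxP xC x_neq0; set u := x^T *m th.
have -> : x^T *m S *m x = 2 *: (u *m invmx H *m u^t*).
  by rewrite trmxC_mul trmxC_theta trmxK xC -scalemxAr -scalemxAl !mulmxA.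
rewrite mxE mulr_gt0 ?ltr0n //; apply: posdefmx_inv sharp_gram_herm sharp_gram_posdef _ _.
by rewrite /u mulmx_free_eq0 ?row_free_unit ?theta_unit // trmx_eq0.
Qed.

Lemma sharpE : sharp (R - P) (R + P) = S.
Proof. exact/sharp_formula/posdefmx_unit/sharp_gram_posdef. Qed.

Lemma sharp_SymR_gt : SymR_gt S.
Proof.
by split; [apply/real_mxP/sharp_real | split; [apply: sharp_sym | apply: sharp_posdef_real]].
Qed.

Lemma sharp_eigen_form (v : 'rV[C]_n) l : v *m (S *m th) = l *: v -> v != 0 ->
  exists2 c, c != 0 & 2 * hform th c = l * hform H c.
Proof.
move=> v_eigen v_neq0; set c := v *m th *m invmx H.
have H_unit := posdefmx_unit sharp_gram_posdef.
have vE : v = c *m H *m th by rewrite /c mulmxKV // thetaKr.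
exists c; first by apply: contraNneq v_neq0 => c0; rewrite vE c0 !mul0mx.
have : 2 *: c = l *: (c *m H *m th).
  by rewrite -vE -v_eigen -scalemxAl -scalemxAr thetaKr !mulmxA.
move=> /(congr1 (fun M => (M *m th *m c^t*) 0 0)) /=.
by rewrite /hform -!scalemxAl thetaKr !mxE.
Qed.

Lemma sharp_eigenvalue l : eigenvalue (S *m th) l -> l \is Num.real /\ -1 <= l <= 1.
Proof.
move=> /eigenvalueP[v v_eigen v_neq0].
have [c c_neq0 form_eq] := sharp_eigen_form v_eigen v_neq0.
apply: (real_le11 (sharp_gram_posdef c_neq0)).
  rewrite -form_eq -(mulr1 2) sharp_gram_shift_form ?expr1n ?conjC1 //.
  exact: posdefmx_ge0 invR_posdef.
rewrite -form_eq -mulN1r mulrA [-1 * 2]mulrC.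
rewrite sharp_gram_shift_form ?sqrrN ?expr1n ?rmorphN1 //.
exact: posdefmx_ge0 invR_posdef.
Qed.

Lemma sharp_SymR_p : SymR_p S.
Proof. by split; [apply: sharp_SymR_gt | apply: sharp_eigenvalue]. Qed.

Lemma sharp_det_neq0 : th + (R + P) \in unitmx -> \det (1%:M + S *m th) != 0.
Proof.
move=> M_unit; apply/det0P => -[v v_neq0].
rewrite mulmxDr mulmx1 => /eqP; rewrite addrC addr_eq0 -scaleN1r => /eqP v_eigen.
have [c c_neq0 form_eq] := sharp_eigen_form v_eigen v_neq0.
have : hform (invmx R) (c *m (th + P + 1 *: R)) = 0.
  by rewrite -sharp_gram_shift_form ?expr1n ?conjC1 // mulr1 form_eq mulN1r subrr.
move/eqP; rewrite scale1r addrAC -addrA gt_eqF //; apply: invR_posdef.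
by rewrite mulmx_free_eq0 ?row_free_unit.
Qed.
End SharpStructure.

Section RealImaginaryParts.
Variables (C : numClosedFieldType) (n : nat) (A : 'M[C]_n).
Hypothesis A_sym : A^T = A.
Local Notation R := (remx A).
Local Notation P := (A - remx A).

Lemma remx_real : R ^ conjC = R.
Proof. by apply/matrixP => i j; rewrite !mxE conj_Creal ?Creal_Re. Qed.

Lemma remx_sym : R^T = R.
Proof. by rewrite /remx map_trmx A_sym. Qed.

Lemma cconj_mx_remx : cconj_mx A = R - P.
Proof. by apply/matrixP => i j; rewrite !mxE ReE; field. Qed.

Lemma immx_conj : P ^ conjC = - P.
Proof. by rewrite map_mxB -/(cconj_mx A) cconj_mx_remx remx_real addrAC subrr add0r. Qed.

Lemma immx_sym : P^T = P.
Proof. by rewrite linearB /= A_sym remx_sym. Qed.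
End RealImaginaryParts.

Theorem mainTheorem8 (C : numClosedFieldType) (d : nat) (hd : (0 < d)%N) :
  (forall A : 'M[C]_(d + d), SymC_gt A -> SymR_p (sharp (cconj_mx A) A)) /\
  (forall A : 'M[C]_(d + d), SymC_gt_qnd A -> SymR_p_qnd (sharp (cconj_mx A) A)).
Proof.
have sharp_props (A : 'M[C]_(d + d)) : SymC_gt A ->
    SymR_p (sharp (cconj_mx A) A) /\
    (\det (1%:M + A *m theta C d) != 0 ->
     \det (1%:M + sharp (cconj_mx A) A *m theta C d) != 0).
  move=> [A_sym A_pos]; have R_real := remx_real A; have R_sym := remx_sym A_sym.
  have R_posdef := posdefmx_real R_real R_sym A_pos.
  have P_conj := immx_conj A; have P_sym := immx_sym A_sym.
  have A_eq : A = remx A + (A - remx A) by rewrite addrC subrK.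
  rewrite cconj_mx_remx [X in sharp _ X]A_eq sharpE //.
  split; first exact: sharp_SymR_p.
  by move=> /theta_add_unit; rewrite {1}A_eq; apply: sharp_det_neq0.
split=> [A /sharp_props[] // | A [/sharp_props[A_p A_det] det_neq0]].
by split=> //; apply: A_det.
Qed.
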